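(* Let $n,N\ge 1$ and let $r_1,\dots,r_N,r$ be positive integers with $r_i\le r\le\lfloor (n-1)/2\rfloor$. Let $f:\mathbb{R}^{Nn}\to\mathbb{R}$ be nonnegative, level-bounded and continuously differentiable with Lipschitz continuous gradient. Let $(k,\mathcal{A}_1,\dots,\mathcal{A}_k,\Omega,C_1,\dots,C_k)$ be given by one of Variants I, II, III described in the context, let $\lambda>0$, and let $$F_\lambda(y)=f(y)+\delta_\Omega(y)+\sum_{i=1}^k\frac1{2\lambda}\mathrm{dist}^2(\mathcal{A}_i(y),C_i),\qquad h(y)=f(y)+\sum_{i=1}^k\frac1{2\lambda}\|\mathcal{A}_i(y)\|_F^2 .$$ Consider the following algorithm (vNPG$_{\rm major}$). Choose $y^0\in\Omega$, $L_{\max}>L_{\min}>0$, $\tau>1$, $c>0$ and an integer $M\ge 0$. At iteration $l=0,1,\dots$: pick any $\xi^l=\sum_{i=1}^k\frac1\lambda\mathcal{A}_i^*(Y_i)$ with $Y_i\in\mathcal{P}_{C_i}(\mathcal{A}_i(y^l))$, choose any $L_l^0\in[L_{\min},L_{\max}]$, and for $i=0,1,\dots$ set $L_{l,i}=L_l^0\tau^i$ and pick any $$u_i^l\in\mathcal{P}^s_\Omega\Big(y^l-\tfrac1{L_{l,i}}(\nabla h(y^l)-\xi^l);\,y^l\Big)$$ until some $u_i^l$ satisfies $$F_\lambda(u_i^l)\le\max_{[l-M]_+\le j\le l}F_\lambda(y^j)-\frac c2\|u_i^l-y^l\|^2 ;$$ then set $\bar L_l=L_{l,i}$ and $y^{l+1}=u_i^l$.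 Then: (i) for every $l$, the inner loop over $i$ terminates after finitely many steps (the line-search criterion is well-defined); (ii) the sequence $\{\bar L_l\}$ is bounded; (iii) for every $\epsilon>0$ there exists $l$ such that the following three conditions hold simultaneously: $$\|y^{l+1}-y^l\|\le\epsilon,\qquad F_\lambda(y^l)\le F_\lambda(y^0),$$ $$\mathrm{dist}\Big(0,\ \nabla f(y^l)+N_\Omega(y^{l+1})+\sum_{i=1}^k\frac1\lambda\mathcal{A}_i^*\big(\mathcal{A}_i(y^l)-\mathcal{P}_{C_i}(\mathcal{A}_i(y^l))\big)\Big)\le\epsilon .$$
   Context: For $x\in\mathbb{R}^n$ and an integer $1\le l\le n$, the Hankel matrix $\mathcal{H}_l(x)\in\mathbb{R}^{l\times(n-l+1)}$ has $(i,j)$ entry $x(i+j-1)$. For $y=(y_1^\top,\dots,y_N^\top)^\top\in\mathbb{R}^{Nn}$ with $y_i\in\mathbb{R}^n$, define linear maps $\mathcal{L}_i(y)=\mathcal{H}_{r_i+1}(y_i)$ ($i=1,\dots,N$) and $\mathcal{L}(y)=[\mathcal{H}_{r+1}(y_1)\ \cdots\ \mathcal{H}_{r+1}(y_N)]$. The three variants are: Variant I: $k=1$, $\mathcal{A}_1=\mathcal{L}$, $\Omega=\{y:\mathrm{rank}(\mathcal{L}_i(y))\le r_i,\ i=1,\dots,N\}$, $C_1=\{Y:\mathrm{rank}(Y)\le r\}$. Variant II: $k=N$, $\mathcal{A}_i=\mathcal{L}_i$, $\Omega=\{y:\mathrm{rank}(\mathcal{L}(y))\le r\}$, $C_i=\{Y:\mathrm{rank}(Y)\le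 r_i\}$. Variant III: $k=N+1$, $\mathcal{A}_i=\mathcal{L}_i$ ($i\le N$), $\mathcal{A}_{N+1}=\mathcal{L}$, $\Omega=\mathbb{R}^{Nn}$, $C_i=\{Y:\mathrm{rank}(Y)\le r_i\}$ ($i\le N$), $C_{N+1}=\{Y:\mathrm{rank}(Y)\le r\}$. Distances and projections $\mathcal{P}_{C}(X)$ (set of nearest points) for matrix sets use the Frobenius norm; $\mathcal{A}_i^*$ is the adjoint; $\delta_\Omega$ is the indicator function of $\Omega$; $N_\Omega(y)$ is the limiting (Mordukhovich) normal cone of $\Omega$ at $y$ in the sense of Rockafellar–Wets; set-valued expressions are Minkowski sums. Pseudo-projection: for a nonempty closed $\Omega\subseteq\mathbb{R}^m$, $u\in\Omega$, $x\in\mathbb{R}^m$, $\mathcal{P}^s_\Omega(x;u)$ is the set of all $y\in\Omega$ with $x-y\in N_\Omega(y)$ and $\|y-x\|\le\|u-x\|$. *)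

From HB Require Import structures.
From mathcomp Require Import all_boot all_order all_algebra.
From mathcomp Require Import boolp classical_sets reals ereal.
Set Implicit Arguments. Unset Strict Implicit. Unset Printing Implicit Defensive.
Import Order.TTheory GRing.Theory Num.Theory.
Local Open Scope classical_set_scope.
Local Open Scope ring_scope.

Section Defs.
Variable R : realType.

Definition fip (p q : nat) (A B : 'M[R]_(p, q)) : R :=
  \sum_(i < p) \sum_(j < q) A i j * B i j.
Definition fnorm (p q : nat) (A : 'M[R]_(p, q)) : R := Num.sqrt (fip A A).

(* vectors of R^m are row vectors 'rV[R]_m; the Euclidean norm is fnorm *)
Definition coord (m : nat) (x : 'rV[R]_m) (k : nat) : R :=
  if insub k is Some i then x 0 i else 0.

(* Hankel matrix H_l(x) in R^{l x (n-l+1)}, entry (i,j) = x(i+j-1) (1-based) *)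
Definition hankel (n l : nat) (x : 'rV[R]_n) : 'M[R]_(l, n - l + 1) :=
  \matrix_(i < l, j < n - l + 1) coord x (i + j).

(* y = (y_1^T, ..., y_N^T)^T in R^{Nn}; block i (0-based) *)
Definition yblock (N n : nat) (y : 'rV[R]_(N * n)) (i : nat) : 'rV[R]_n :=
  \row_(t < n) coord y (i * n + t).

Definition Lop_i (N n : nat) (ri : nat) (i : nat) (y : 'rV[R]_(N * n)) :=
  hankel (ri.+1) (yblock y i).

(* L(y) = [H_{r+1}(y_1) ... H_{r+1}(y_N)], horizontal concatenation of the N
   Hankel blocks of width w = n-(r+1)+1: column b lies in block b / w at
   local column b mod w, so the entry is y_{b/w}(a + (b mod w)) (0-based),
   i.e. hankel (r.+1) (yblock y (b %/ w)) a (b %% w). *)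
Definition Lop (N n r : nat) (y : 'rV[R]_(N * n)) :
    'M[R]_(r.+1, N * (n - r.+1 + 1)) :=
  \matrix_(a < r.+1, b < N * (n - r.+1 + 1))
     coord (yblock y (b %/ (n - r.+1 + 1))) (a + b %% (n - r.+1 + 1)).

(* adjoint of a linear map A : R^m -> R^{p x q} w.r.t. the Frobenius product:
   (A^* Y)_j = <Y, A(e_j)>_F *)
Definition adj (m p q : nat) (A : 'rV[R]_m -> 'M[R]_(p, q)) (Y : 'M[R]_(p, q))
  : 'rV[R]_m := \row_(j < m) fip Y (A (delta_mx 0 j)).

Definition proj (p q : nat) (C : set 'M[R]_(p, q)) (X : 'M[R]_(p, q)) :
    set 'M[R]_(p, q) :=
  [set Y | C Y /\ forall Z, C Z -> fnorm (X - Y) <= fnorm (X - Z)].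
Definition dist (p q : nat) (X : 'M[R]_(p, q)) (C : set 'M[R]_(p, q)) : R :=
  inf [set fnorm (X - Z) | Z in C].

(* extended-real distance from a vector to a set (+oo for the empty set) *)
Definition edist (m : nat) (x : 'rV[R]_m) (S : set 'rV[R]_m) : \bar R :=
  ereal_inf [set (fnorm (x - w))%:E | w in S].

(* ---------- a "component" (A_i, C_i) with C_i = {Y | rank Y <= crk} *)
Record comp (m : nat) := Comp {
  cp : nat; cq : nat;
  cA : 'rV[R]_m -> 'M[R]_(cp, cq);
  crk : nat }.

Definition rkset (m : nat) (c : comp m) : set 'M[R]_(cp c, cq c) :=
  [set Y | (\rank Y <= crk c)%N].
Arguments rkset {m} c.
Arguments cA {m} c.
Arguments cp {m} c.
Arguments cq {m} c.
Arguments crk {m} c.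

Inductive variant := VariantI | VariantII | VariantIII.

Definition compLi (N n : nat) (rs : 'I_N -> nat) (i : 'I_N) : comp (N * n) :=
  @Comp (N * n) (rs i).+1 (n - (rs i).+1 + 1) (Lop_i (rs i) i) (rs i).
Definition compL (N n r : nat) : comp (N * n) :=
  @Comp (N * n) r.+1 (N * (n - r.+1 + 1)) (@Lop N n r) r.

Definition comps (N n r : nat) (rs : 'I_N -> nat) (v : variant)
  : seq (comp (N * n)) :=
  match v with
  | VariantI => [:: compL N n r]
  | VariantII => [seq @compLi N n rs i | i <- enum 'I_N]
  | VariantIII => rcons [seq @compLi N n rs i | i <- enum 'I_N] (compL N n r)
  end.

Definition Omega (N n r : nat) (rs : 'I_N -> nat) (v : variant)
  : set 'rV[R]_(N * n) :=
  match v with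
  | VariantI => [set y | forall i : 'I_N, (\rank (Lop_i (rs i) i y) <= rs i)%N]
  | VariantII => [set y | (\rank (@Lop N n r y) <= r)%N]
  | VariantIII => setT
  end.

Definition is_gradient (m : nat) (f : 'rV[R]_m -> R) (g : 'rV[R]_m -> 'rV[R]_m) :=
  forall x eps, 0 < eps -> exists2 delta, 0 < delta & forall z,
    fnorm (z - x) < delta ->
    `|f z - f x - fip (g x) (z - x)| <= eps * fnorm (z - x).

Definition lipschitz (m : nat) (g : 'rV[R]_m -> 'rV[R]_m) :=
  exists Lg : R, forall x z, fnorm (g x - g z) <= Lg * fnorm (x - z).

Definition level_bounded (m : nat) (f : 'rV[R]_m -> R) :=
  forall alpha : R, exists B : R, forall y, f y <= alpha -> fnorm y <= B.

Definition reg_normal (m : nat) (O : set 'rV[R]_m) (x : 'rV[R]_m) : set 'rV[R]_m :=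
  [set v | O x /\ forall eps, 0 < eps -> exists2 delta, 0 < delta &
     forall z, O z -> fnorm (z - x) < delta -> fip v (z - x) <= eps * fnorm (z - x)].

Definition seq_cvg (m : nat) (s : nat -> 'rV[R]_m) (x : 'rV[R]_m) :=
  forall eps, 0 < eps -> exists K, forall k, (K <= k)%N -> fnorm (s k - x) < eps.

Definition lim_normal (m : nat) (O : set 'rV[R]_m) (x : 'rV[R]_m) : set 'rV[R]_m :=
  [set v | O x /\ exists (xs vs : nat -> 'rV[R]_m),
     (forall k, O (xs k)) /\ seq_cvg xs x /\ seq_cvg vs v /\
     forall k, reg_normal O (xs k) (vs k)].

Definition pseudo_proj (m : nat) (O : set 'rV[R]_m) (x u : 'rV[R]_m) : set 'rV[R]_m :=
  [set z | O z /\ lim_normal O z (x - z) /\ fnorm (z - x) <= fnorm (u - x)].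

Definition indicator (m : nat) (O : set 'rV[R]_m) (y : 'rV[R]_m) : \bar R :=
  if y \in O then 0%E else +oo%E.

Definition Flam (m : nat) (f : 'rV[R]_m -> R) (O : set 'rV[R]_m)
  (cs : seq (comp m)) (lam : R) (y : 'rV[R]_m) : \bar R :=
  ((f y)%:E + indicator O y +
   (\sum_(c <- cs) (2 * lam)^-1 * dist (cA c y) (rkset c) ^+ 2)%:E)%E.

Definition hfun (m : nat) (f : 'rV[R]_m -> R) (cs : seq (comp m)) (lam : R)
  (y : 'rV[R]_m) : R :=
  f y + \sum_(c <- cs) (2 * lam)^-1 * fnorm (cA c y) ^+ 2.

Fixpoint xiset (m : nat) (lam : R) (cs : seq (comp m)) (y : 'rV[R]_m)
  : set 'rV[R]_m :=
  match cs with
  | [::] => [set 0]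
  | c :: cs' => [set w | exists Y s, proj (rkset c) (cA c y) Y /\
                   xiset lam cs' y s /\ w = lam^-1 *: adj (cA c) Y + s]
  end.

Fixpoint resset (m : nat) (lam : R) (cs : seq (comp m)) (y : 'rV[R]_m)
  : set 'rV[R]_m :=
  match cs with
  | [::] => [set 0]
  | c :: cs' => [set w | exists Y s, proj (rkset c) (cA c y) Y /\
                   resset lam cs' y s /\
                   w = lam^-1 *: adj (cA c) (cA c y - Y) + s]
  end.

(* max_{[l-M]_+ <= j <= l} F(y^j)   (nat subtraction is truncated) *)
Definition maxF (m : nat) (F : 'rV[R]_m -> \bar R) (M : nat)
  (y : nat -> 'rV[R]_m) (l : nat) : \bar R :=
  \big[maxe/-oo%E]_(l - M <= j < l.+1) F (y j).

Definition ls_ok (m : nat) (F : 'rV[R]_m -> \bar R) (M : nat) (c : R)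
  (y : nat -> 'rV[R]_m) (l : nat) (u : 'rV[R]_m) : Prop :=
  (F u <= maxF F M y l - (c / 2 * fnorm (u - y l) ^+ 2)%:E)%E.

Definition trial (m : nat) (gh : 'rV[R]_m -> 'rV[R]_m) (yl xi : 'rV[R]_m)
  (L0 tau : R) (i : nat) : 'rV[R]_m :=
  yl - (L0 * tau ^+ i)^-1 *: (gh yl - xi).

(* one outer iteration l: y^{l+1} and bar L_l = Lb are produced by some
   admissible choice of xi^l, L_l^0, and inner candidates u_0,...,u_i,
   where u_i is the first candidate passing the test *)
Definition alg_step (m : nat) (O : set 'rV[R]_m) (Xi : 'rV[R]_m -> set 'rV[R]_m)
  (gh : 'rV[R]_m -> 'rV[R]_m) (F : 'rV[R]_m -> \bar R) (M : nat)
  (c Lmin Lmax tau : R) (y : nat -> 'rV[R]_m) (l : nat) (Lb : R) : Prop :=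
  exists xi, Xi (y l) xi /\
  exists L0, (Lmin <= L0 <= Lmax) /\
  exists (i : nat) (u : nat -> 'rV[R]_m),
    (forall j, (j <= i)%N -> pseudo_proj O (trial gh (y l) xi L0 tau j) (y l) (u j)) /\
    (forall j, (j < i)%N -> ~ ls_ok F M c y l (u j)) /\
    ls_ok F M c y l (u i) /\
    Lb = L0 * tau ^+ i /\ y l.+1 = u i.

Definition stat_set (m : nat) (O : set 'rV[R]_m) (gf : 'rV[R]_m -> 'rV[R]_m)
  (lam : R) (cs : seq (comp m)) (y : nat -> 'rV[R]_m) (l : nat) : set 'rV[R]_m :=
  [set w | exists vN s, lim_normal O (y l.+1) vN /\ resset lam cs (y l) s /\
    w = gf (y l) + vN + s].

End Defs.

(* Every A_i only reads coordinates of y, so h - f is a quadratic form bounded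
   by K |y|^2, while dist^2(A_i u, C_i) <= |A_i u - Y_i|^2 for the projections
   Y_i defining xi.  Together with the descent lemma for f, this majorizes
   F_lambda near y^l by a quadratic model with linear part grad h(y^l) - xi^l,
   and the defining inequality |u - x| <= |y^l - x| of the pseudo-projection
   gives the sufficient decrease F(u) <= F(y^l) - (L/2 - L_f - K) |u - y^l|^2.
   Hence every trial with L_{l,i} >= 2 (L_f + K) + c passes the test: the line
   search stops (pseudo-projections exist because Omega is closed, rank
   sublevel sets being closed) and bar L_l <= L_max + tau (2 (L_f + K) + c).
   As F >= 0, the maximum of F over the last M+1 iterates cannot drop by
   (c/2) eps^2 every M+1 iterations forever, so some step is shorter than eps;
   at that step bar L_l (y^l - y^{l+1}) belongs to the stationarity set,
   because x - y^{l+1} is a limiting normal to Omega at y^{l+1}. *)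

From HB Require Import structures.
From mathcomp Require Import all_boot all_order all_algebra.
From mathcomp Require Import boolp classical_sets reals ereal topology normedtype.
From mathcomp Require Import sequences derive.
From mathcomp Require Import ring lra zify.
Import Order.TTheory GRing.Theory Num.Theory numFieldNormedType.Exports.
Set Implicit Arguments. Unset Strict Implicit. Unset Printing Implicit Defensive.
Local Open Scope classical_set_scope.
Local Open Scope ring_scope.

Section Frobenius.
Variables (R : realType) (p q : nat).
Implicit Types A B C : 'M[R]_(p, q).

Lemma fipC A B : fip A B = fip B A.
Proof. by apply: eq_bigr => i _; apply: eq_bigr => j _; rewrite mulrC. Qed.

Lemma fipDl A B C : fip (A + B) C = fip A C + fip B C.
Proof.
rewrite /fip -big_split; apply: eq_bigr => i _; rewrite -big_split.
by apply: eq_bigr => j _; rewrite !mxE mulrDl.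
Qed.

Lemma fipZl a A B : fip (a *: A) B = a * fip A B.
Proof.
rewrite /fip mulr_sumr; apply: eq_bigr => i _; rewrite mulr_sumr.
by apply: eq_bigr => j _; rewrite !mxE mulrA.
Qed.

Lemma fipNl A B : fip (- A) B = - fip A B.
Proof. by rewrite -scaleN1r fipZl mulN1r. Qed.

Lemma fipBl A B C : fip (A - B) C = fip A C - fip B C.
Proof. by rewrite fipDl fipNl. Qed.

Lemma fipDr A B C : fip A (B + C) = fip A B + fip A C.
Proof. by rewrite fipC fipDl !(fipC A). Qed.

Lemma fipZr a A B : fip A (a *: B) = a * fip A B.
Proof. by rewrite fipC fipZl fipC. Qed.

Lemma fipNr A B : fip A (- B) = - fip A B.
Proof. by rewrite fipC fipNl fipC. Qed.

Lemma fipBr A B C : fip A (B - C) = fip A B - fip A C.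
Proof. by rewrite fipDr fipNr. Qed.

Lemma fip0l A : fip 0 A = 0.
Proof. by rewrite -(scale0r 0) fipZl mul0r. Qed.

Lemma fip0r A : fip A 0 = 0.
Proof. by rewrite fipC fip0l. Qed.

Lemma fip_ge0 A : 0 <= fip A A.
Proof. by apply: sumr_ge0 => i _; apply: sumr_ge0 => j _; rewrite -expr2 sqr_ge0. Qed.

Lemma sqr_entry_le_fip A i j : A i j ^+ 2 <= fip A A.
Proof.
rewrite /fip (bigD1 i) //= (bigD1 j) //= -expr2 -addrA lerDl addr_ge0 //.
  by apply: sumr_ge0 => k _; rewrite -expr2 sqr_ge0.
by apply: sumr_ge0 => k _; apply: sumr_ge0 => l _; rewrite -expr2 sqr_ge0.
Qed.

Lemma fip_eq0 A : fip A A = 0 -> A = 0.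
Proof.
move=> A0; apply/matrixP => i j; rewrite mxE; apply/eqP.
by rewrite -sqrf_eq0 eq_le sqr_ge0 -A0 sqr_entry_le_fip.
Qed.

Lemma fnorm_ge0 A : 0 <= fnorm A.
Proof. exact: sqrtr_ge0. Qed.

Lemma sqr_fnorm A : fnorm A ^+ 2 = fip A A.
Proof. by rewrite sqr_sqrtr // fip_ge0. Qed.

Lemma fnorm0 : fnorm (0 : 'M[R]_(p, q)) = 0.
Proof. by rewrite /fnorm fip0l sqrtr0. Qed.

Lemma fnormZ a A : fnorm (a *: A) = `|a| * fnorm A.
Proof. by rewrite /fnorm fipZl fipZr mulrA -expr2 sqrtrM ?sqr_ge0 // sqrtr_sqr. Qed.

Lemma fnormN A : fnorm (- A) = fnorm A.
Proof. by rewrite -scaleN1r fnormZ normrN normr1 mul1r. Qed.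

Lemma fnormBC A B : fnorm (A - B) = fnorm (B - A).
Proof. by rewrite -fnormN opprB. Qed.

Lemma sqr_fnormD A B :
  fnorm (A + B) ^+ 2 = fnorm A ^+ 2 + 2 * fip A B + fnorm B ^+ 2.
Proof. by rewrite !sqr_fnorm fipDl !fipDr (fipC B A); ring. Qed.

Lemma sqr_fnormB A B :
  fnorm (A - B) ^+ 2 = fnorm A ^+ 2 - 2 * fip A B + fnorm B ^+ 2.
Proof. by rewrite sqr_fnormD fnormN fipNr; ring. Qed.

Lemma fip_le_fnorm A B : fip A B <= fnorm A * fnorm B.
Proof.
have [/fip_eq0 ->|B0] := eqVneq (fip B B) 0.
  by rewrite fip0r mulr_ge0 // fnorm_ge0.
have BB0 : 0 < fip B B by rewrite lt_def B0 fip_ge0.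
set a := fip A A; set b := fip A B; set c := fip B B.
(* the discriminant inequality, read off 0 <= |A - (b/c) B|^2 *)
have b2_le : b ^+ 2 <= a * c.
  have := fip_ge0 (A - (b / c) *: B).
  rewrite fipBl !fipBr !fipZl !fipZr -/a -/b -/c (fipC B A) -/b.
  have -> : a - b / c * b - (b / c * b - b / c * (b / c * c)) = a - b ^+ 2 / c.
    by field; rewrite gt_eqF.
  by rewrite subr_ge0 ler_pdivrMr.
have [b_le0|b_gt0] := leP b 0.
  by apply: le_trans b_le0 _; rewrite mulr_ge0 ?fnorm_ge0.
rewrite -(ler_pXn2r (n:=2)) // ?nnegrE ?mulr_ge0 ?fnorm_ge0 ?(ltW b_gt0) //.
by rewrite exprMn !sqr_fnorm.
Qed.

Lemma normr_fip_le A B : `|fip A B| <= fnorm A * fnorm B.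
Proof.
by rewrite ler_norml fip_le_fnorm andbT lerNl -fipNl -(fnormN A); apply: fip_le_fnorm.
Qed.

Lemma fnormD A B : fnorm (A + B) <= fnorm A + fnorm B.
Proof.
rewrite -(ler_pXn2r (n:=2)) ?nnegrE ?addr_ge0 ?fnorm_ge0 //.
by rewrite sqr_fnormD sqrrD lerD2r lerD2l; have := fip_le_fnorm A B; lra.
Qed.

Lemma normr_entry_le_fnorm A i j : `|A i j| <= fnorm A.
Proof.
rewrite -(ler_pXn2r (n:=2)) ?nnegrE ?fnorm_ge0 // real_normK ?num_real //.
by rewrite sqr_fnorm sqr_entry_le_fip.
Qed.

Lemma sqr_fnorm_le_entries A e : (forall i j, `|A i j| <= e) ->
  fnorm A ^+ 2 <= (p * q)%:R * e ^+ 2.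
Proof.
move=> Ae; rewrite sqr_fnorm; apply: le_trans (_ : \sum_(i < p) \sum_(j < q) e ^+ 2 <= _).
  apply: ler_sum => i _; apply: ler_sum => j _; rewrite -expr2 -real_normK ?num_real //.
  by rewrite lerXn2r ?nnegrE ?(le_trans _ (Ae i j)).
by rewrite !sumr_const !card_ord -mulrnA mulr_natl mulnC.
Qed.

Lemma fnorm_le_entries A e : 0 <= e -> (forall i j, `|A i j| <= e) ->
  fnorm A <= (p * q).+1%:R * e.
Proof.
move=> e0 /sqr_fnorm_le_entries Ae.
rewrite -(ler_pXn2r (n:=2)) ?nnegrE ?fnorm_ge0 ?mulr_ge0 // (le_trans Ae) //.
rewrite exprMn ler_wpM2r ?sqr_ge0 // -natrX ler_nat (leq_trans (leqnSn _)) //.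
by rewrite -[X in (X <= _)%N]muln1 leq_mul // expn2 leq_mul.
Qed.

End Frobenius.

Section CoordinateMaps.
Variable R : realType.

(* Every Hankel-type operator of the statement has this shape: each entry of
   [A y] is a fixed coordinate of [y] (or the junk value [0] of [coord]). *)
Definition coord_map m p q (A : 'rV[R]_m -> 'M[R]_(p, q)) :=
  forall a b, exists k, forall y, A y a b = coord y k.

Lemma coord_linear m (y z : 'rV[R]_m) a k :
  coord (a *: y + z) k = a * coord y k + coord z k.
Proof. by rewrite /coord; case: insubP => [i _ _|_]; rewrite ?mxE ?mulr0 ?addr0. Qed.

Lemma normr_coord_le m (y : 'rV[R]_m) k : `|coord y k| <= fnorm y.
Proof.
by rewrite /coord; case: insubP => [i _ _|_]; rewrite ?normr0 ?fnorm_ge0 ?normr_entry_le_fnorm.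
Qed.

Section CoordMap.
Variables (m p q : nat) (A : 'rV[R]_m -> 'M[R]_(p, q)).
Hypothesis A_coord : coord_map A.

Lemma coord_map_linear a y z : A (a *: y + z) = a *: A y + A z.
Proof.
by apply/matrixP => i j; have [k Ak] := A_coord i j; rewrite !mxE !Ak coord_linear.
Qed.

Lemma coord_map0 : A 0 = 0.
Proof. by have := coord_map_linear (-1) 0 0; rewrite scaler0 addr0 scaleN1r addNr. Qed.

Lemma coord_mapD y z : A (y + z) = A y + A z.
Proof. by have := coord_map_linear 1 y z; rewrite !scale1r. Qed.

Lemma coord_mapZ a y : A (a *: y) = a *: A y.
Proof. by rewrite -[a *: y]addr0 coord_map_linear coord_map0 addr0. Qed.

Lemma coord_mapB y z : A (y - z) = A y - A z.
Proof. by rewrite coord_mapD -scaleN1r coord_mapZ scaleN1r. Qed.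

Lemma sqr_fnorm_coord_map_le y : fnorm (A y) ^+ 2 <= (p * q)%:R * fnorm y ^+ 2.
Proof.
by apply: sqr_fnorm_le_entries => i j; have [k ->] := A_coord i j; apply: normr_coord_le.
Qed.

Lemma fnorm_coord_map_le y : fnorm (A y) <= (p * q).+1%:R * fnorm y.
Proof.
apply: fnorm_le_entries (fnorm_ge0 _) _ => i j.
by have [k ->] := A_coord i j; apply: normr_coord_le.
Qed.

Lemma fip_adj Y d : fip (adj A Y) d = fip Y (A d).
Proof.
have -> : d = \sum_(j < m) d 0 j *: delta_mx 0 j.
  by rewrite [LHS]matrix_sum_delta big_ord1; apply: eq_bigr => j _; rewrite ord1.
rewrite (big_morph A coord_mapD coord_map0) (big_morph _ (fipDr Y) (fip0r Y)).
rewrite (big_morph _ (fipDr _) (fip0r _)); apply: eq_bigr => j _.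
rewrite coord_mapZ !fipZr /fip big_ord1 (bigD1 j) //= big1 ?addr0 ?mxE ?eqxx ?mulr1 //.
by move=> k /negbTE kj; rewrite !mxE kj andbF mulr0.
Qed.

End CoordMap.

Lemma adjB m p q (A : 'rV[R]_m -> 'M[R]_(p, q)) Y Z :
  adj A (Y - Z) = adj A Y - adj A Z.
Proof. by apply/matrixP => i j; rewrite !mxE fipBl. Qed.

Fixpoint all_coord_maps m (cs : seq (comp R m)) : Prop :=
  if cs is c :: cs' then coord_map (cA c) /\ all_coord_maps cs' else True.

Lemma all_coord_maps_rcons m (cs : seq (comp R m)) c :
  all_coord_maps cs -> coord_map (cA c) -> all_coord_maps (rcons cs c).
Proof. by elim: cs => [|d cs IH] /= => [_ Ac|[Ad Acs] Ac]; split => //; apply: IH. Qed.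

Lemma coord_yblock N n (y : 'rV[R]_(N * n)) i t :
  coord (yblock y i) t = coord y (if (t < n)%N then (i * n + t)%N else (N * n)%N).
Proof.
rewrite /coord; case: insubP => [u ut <-|tn]; first by rewrite mxE ltn_ord /coord.
by rewrite (negbTE tn); case: insubP => // u; rewrite ltnn.
Qed.

Lemma coord_map_Lop N n r : coord_map (@Lop R N n r).
Proof. by move=> a b; eexists => y; rewrite mxE coord_yblock. Qed.

Lemma coord_map_Lop_i N n ri i : coord_map (@Lop_i R N n ri i).
Proof. by move=> a b; eexists => y; rewrite /Lop_i /hankel mxE coord_yblock. Qed.

Lemma all_coord_maps_comps n N r (rs : 'I_N -> nat) v :
  all_coord_maps (comps R n r rs v).
Proof.
have Li s : all_coord_maps [seq @compLi R N n rs i | i <- s].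
  by elim: s => [|i s IH] //=; split => //; apply: coord_map_Lop_i.
case: v => /=; [split=> //; apply: coord_map_Lop | exact: Li |].
by apply: all_coord_maps_rcons; [apply: Li | apply: coord_map_Lop].
Qed.

End CoordinateMaps.

Section NearestPoints.
Variable R : realType.

Definition mx_cvg p q (Z : nat -> 'M[R]_(p, q)) L :=
  forall e, 0 < e -> exists K, forall k, (K <= k)%N -> fnorm (Z k - L) < e.

Definition seq_closed p q (S : set 'M[R]_(p, q)) :=
  forall Z L, (forall k, S (Z k)) -> mx_cvg Z L -> S L.

Lemma increasing_seq_geq (f : nat -> nat) : increasing_seq f -> forall k, (k <= f k)%N.
Proof.
by move=> /increasing_seqP f_incr; elim=> // k IH; apply: leq_ltn_trans IH (f_incr k).
Qed.

Lemma bounded_cvg_subseq (u : nat -> R) B : (forall k, `|u k| <= B) ->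
  exists f l, increasing_seq f /\
    forall e, 0 < e -> exists K, forall k, (K <= k)%N -> `|u (f k) - l| < e.
Proof.
move=> uB; have [|f f_incr /cvg_ex[l ul]] := bolzano_weierstrass (u_ := u).
  exists B; split; first exact: num_real.
  by move=> M BM k _; apply: le_trans (uB k) (ltW BM).
exists f, l; split=> // e e0; have /cvgrPdist_lt/(_ e e0)[K _ uK] := ul.
by exists K => k Kk; rewrite distrC; apply: uK.
Qed.

Lemma bounded_mx_cvg_subseq p q (Z : nat -> 'M[R]_(p, q)) B :
  (forall k i j, `|Z k i j| <= B) ->
  exists f L, increasing_seq f /\ mx_cvg (Z \o f) L.
Proof.
move=> ZB.
(* extract one convergent subsequence per entry, one entry after the other *)
have entries (s : seq ('I_p * 'I_q)) : exists f (L : 'M[R]_(p, q)), increasing_seq f /\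
    forall e, 0 < e -> exists K, forall k, (K <= k)%N -> forall ij, ij \in s ->
      `|Z (f k) ij.1 ij.2 - L ij.1 ij.2| < e.
  elim: s => [|[i j] s [f [L [f_incr ZL]]]].
    by exists id, 0; split=> // e e0; exists 0%N.
  have [g [l [g_incr Zl]]] := bounded_cvg_subseq (fun k => ZB (f k) i j).
  exists (f \o g), (\matrix_(a, b) if (a == i) && (b == j) then l else L a b).
  split=> [k k' /=|e e0]; first by rewrite f_incr; apply: g_incr.
  have [K1 ZK1] := ZL e e0; have [K2 ZK2] := Zl e e0.
  exists (maxn K1 K2) => k; rewrite geq_max => /andP[k1 k2] [a b].
  rewrite !mxE /=; case: ifP => [/andP[/eqP-> /eqP->] _|ab]; first exact: ZK2.
  rewrite inE => /orP[/eqP[ai bj]|abs]; first by rewrite ai bj !eqxx in ab.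
  by apply: (ZK1 _ _ (a, b)) => //; apply: leq_trans k1 (increasing_seq_geq g_incr k).
have [f [L [f_incr ZL]]] := entries (enum (predT : pred ('I_p * 'I_q))).
exists f, L; split=> // e e0.
have e'0 : 0 < e / (p * q).+2%:R by rewrite divr_gt0.
have [K ZK] := ZL _ e'0; exists K => k Kk.
apply: le_lt_trans (fnorm_le_entries (ltW e'0) _) _.
  by move=> a b; rewrite !mxE ltW // (ZK k Kk (a, b)) // mem_enum.
by rewrite mulrA ltr_pdivrMr ?ltr0n // mulrC ltr_pM2l // ltr_nat.
Qed.

Lemma exists_proj p q (S : set 'M[R]_(p, q)) Z0 X :
  seq_closed S -> S Z0 -> exists Y, proj S X Y.
Proof.
move=> S_closed SZ0.
set D := [set fnorm (X - Z) | Z in S].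
have D_inf : has_inf D.
  by split; [exists (fnorm (X - Z0)), Z0 | exists 0 => _ [Z _ <-]; apply: fnorm_ge0].
set d := inf D.
have d_le W : S W -> d <= fnorm (X - W).
  by move=> SW; apply: ge_inf; [exact: D_inf.2 | exists W].
have d0 : 0 <= d by apply: lb_le_inf; [exact: D_inf.1 | move=> _ [Z _ <-]; apply: fnorm_ge0].
have /choice[Zs Zs_min] k : exists Z, S Z /\ fnorm (X - Z) < d + k.+1%:R^-1.
  have k0 : 0 < k.+1%:R^-1 :> R by rewrite invr_gt0 ltr0n.
  by have [_ [Z SZ <-] XZ] := inf_adherent k0 D_inf; exists Z.
have ZsB k i j : `|Zs k i j| <= fnorm X + (d + 1).
  apply: le_trans (normr_entry_le_fnorm _ i j) _.
  rewrite -[Zs k](subKr X) (le_trans (fnormD _ _)) // fnormN lerD2l.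
  by rewrite (le_trans (ltW (Zs_min k).2)) // lerD2l invf_le1 ?ler1n ?ltr0n.
have [f [L [f_incr ZL]]] := bounded_mx_cvg_subseq ZsB.
have SL : S L by apply: (S_closed _ _ _ ZL) => k; apply: (Zs_min _).1.
exists L; split=> // W SW; apply: le_trans (d_le W SW).
apply/ler_addgt0Pr => e e0; have e20 : 0 < e / 2 by rewrite divr_gt0.
have [K ZK] := ZL _ e20.
have [k0 k0_gt] : exists k0 : nat, (e / 2)^-1 < k0%:R.
  by exists (Num.Def.archi_bound (e / 2)^-1); apply: archi_boundP; rewrite invr_ge0 ltW.
set k := maxn K k0.
have fk_small : (f k).+1%:R^-1 <= e / 2.
  rewrite -[X in _ <= X]invrK lef_pV2 ?posrE ?invr_gt0 ?ltr0n // (le_trans (ltW k0_gt)) //.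
  rewrite ler_nat (leq_trans (leq_maxr K k0)) // (leq_trans (increasing_seq_geq f_incr k)) //.
have -> : X - L = (X - Zs (f k)) + (Zs (f k) - L) by rewrite addrA subrK.
apply: le_trans (fnormD _ _) _; rewrite [e]splitr addrA.
apply: lerD; last by apply: ltW; apply: ZK; apply: leq_maxl.
by apply: le_trans (ltW (Zs_min _).2) _; rewrite lerD2l.
Qed.

Section Distances.
Variables (p q : nat) (C : set 'M[R]_(p, q)).

Lemma dist_le X Z : C Z -> dist X C <= fnorm (X - Z).
Proof.
move=> CZ; apply: ge_inf; last by exists Z.
by exists 0 => _ [W _ <-]; apply: fnorm_ge0.
Qed.

Lemma dist_ge0 X Z : C Z -> 0 <= dist X C.
Proof.
move=> CZ; apply: lb_le_inf; first by exists (fnorm (X - Z)), Z.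
by move=> _ [W _ <-]; apply: fnorm_ge0.
Qed.

Lemma dist_proj X Y : proj C X Y -> dist X C = fnorm (X - Y).
Proof.
move=> [CY Y_min]; apply/eqP; rewrite eq_le dist_le //=.
apply: lb_le_inf; first by exists (fnorm (X - Y)), Y.
by move=> _ [W CW <-]; apply: Y_min.
Qed.

End Distances.

End NearestPoints.

Section ClosedSets.
Variable R : realType.

Lemma cvg_det n (A : nat -> 'M[R]_n) (B : 'M[R]_n) :
  (forall i j, (fun k => A k i j) @ \oo --> B i j) ->
  (fun k => \det (A k)) @ \oo --> \det B.
Proof.
move=> AB; apply: cvg_big => [|s _]; first exact: add_continuous.
apply: cvgM; first exact: cvg_cst.
by apply: cvg_big => [|i _]; [exact: mul_continuous | apply: AB].
Qed.

Lemma mx_cvg_entry p q (Z : nat -> 'M[R]_(p, q)) L i j :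
  mx_cvg Z L -> (fun k => Z k i j) @ \oo --> L i j.
Proof.
move=> ZL; apply/cvgrPdist_lt => e e0; have [K ZK] := ZL e e0.
exists K => // k /= Kk; rewrite distrC; apply: le_lt_trans (ZK k Kk).
by have := normr_entry_le_fnorm (Z k - L) i j; rewrite !mxE.
Qed.

(* A limit of rank > k would have an invertible (k+1)-minor, whose determinant
   is a limit of vanishing minors of the sequence. *)
Lemma seq_closed_rank_le p q k : seq_closed [set Y : 'M[R]_(p, q) | (\rank Y <= k)%N].
Proof.
move=> Z L /= Zk ZL; rewrite leqNgt; apply/negP => kL.
have full : row_full (rowsub (maxrankfun L) L)^T.
  by rewrite /row_full mxrank_tr; apply: maxrowsub_free.
pose T (Y : 'M[R]_(p, q)) := rowsub (fullrankfun full) (rowsub (maxrankfun L) Y)^T.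
have TL : T L \in unitmx by rewrite -row_full_unit; apply: fullrowsub_full.
have TZ j : \det (T (Z j)) = 0.
  apply/eqP; apply: contraT; rewrite -unitfE -unitmxE -row_full_unit => /eqP TZj.
  have := Zk j; rewrite leqNgt => /negbTE <-; apply: leq_trans kL _.
  rewrite -[X in (X <= _)%N]TZj /T rowsubE (leq_trans (mxrankM_maxr _ _)) //.
  by rewrite mxrank_tr rowsubE mxrankM_maxr.
have detT : (fun j => \det (T (Z j))) @ \oo --> \det (T L).
  by apply: cvg_det => i j; under eq_cvg do rewrite !mxE; rewrite !mxE; apply: mx_cvg_entry.
have detT0 : (fun j => \det (T (Z j))) @ \oo --> (0 : R).
  by under eq_cvg do rewrite TZ; apply: cvg_cst.
have detTL0 : \det (T L) = 0 by apply: cvg_unique detT detT0.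
by move: TL; rewrite unitmxE detTL0 unitr0.
Qed.

Lemma seq_closed_coord_preim m p q (S : set 'M[R]_(p, q)) (A : 'rV[R]_m -> 'M[R]_(p, q)) :
  coord_map A -> seq_closed S -> seq_closed [set y | S (A y)].
Proof.
move=> A_coord S_closed Z L /= SZ ZL; apply: (S_closed (A \o Z)) => // e e0.
have e'0 : 0 < e / (p * q).+1%:R by rewrite divr_gt0.
have [K ZK] := ZL _ e'0; exists K => k Kk /=.
rewrite -(coord_mapB A_coord) (le_lt_trans (fnorm_coord_map_le A_coord _)) //.
by rewrite mulrC -ltr_pdivlMr ?ltr0n ?ZK.
Qed.

Lemma seq_closed_Omega N n r (rs : 'I_N -> nat) v : seq_closed (@Omega R N n r rs v).
Proof.
have rank_closed := seq_closed_rank_le.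
case: v => //= [Z L OZ ZL i|].
- apply: (seq_closed_coord_preim (@coord_map_Lop_i _ _ _ _ _) (rank_closed _ _ _)) ZL.
  by move=> k; apply: OZ.
- exact: seq_closed_coord_preim (@coord_map_Lop _ _ _ _) (rank_closed _ _ _).
Qed.

End ClosedSets.

Section NormalCones.
Variables (R : realType) (m : nat) (O : set 'rV[R]_m).

Lemma proj_reg_normal x z : O z ->
  (forall w, O w -> fnorm (x - z) <= fnorm (x - w)) -> reg_normal O z (x - z).
Proof.
move=> Oz z_min; split=> // e e0; exists (2 * e); first by rewrite mulr_gt0.
move=> w Ow wz.
have : fnorm (x - z) ^+ 2 <= fnorm ((x - z) - (w - z)) ^+ 2.
  by rewrite opprB addrA subrK ler_pXn2r ?nnegrE ?fnorm_ge0 ?z_min.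
rewrite (sqr_fnormB (x - z)) => h.
have : fnorm (w - z) ^+ 2 <= 2 * (e * fnorm (w - z)).
  by rewrite mulrA expr2 ler_wpM2r ?fnorm_ge0 // ltW.
lra.
Qed.

Lemma reg_lim_normal z v : reg_normal O z v -> lim_normal O z v.
Proof.
move=> [Oz vz]; split=> //; exists (fun=> z), (fun=> v).
have cst_cvg (a : 'rV[R]_m) : seq_cvg (fun=> a) a.
  by move=> e e0; exists 0%N => k _; rewrite subrr fnorm0.
by do !split=> //; apply: cst_cvg.
Qed.

Lemma reg_normalZ z v t : 0 < t -> reg_normal O z v -> reg_normal O z (t *: v).
Proof.
move=> t0 [Oz vz]; split=> // e e0.
have [d d0 vd] := vz (e / t) (divr_gt0 e0 t0); exists d => // w Ow wd.
by rewrite fipZl mulrC -ler_pdivlMr // mulrAC vd.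
Qed.

Lemma lim_normalZ z v t : 0 < t -> lim_normal O z v -> lim_normal O z (t *: v).
Proof.
move=> t0 [Oz [xs [vs [Oxs [xs_z [vs_v vsN]]]]]]; split=> //.
exists xs, (t \*: vs); do 2!split=> //; split=> [e e0|k]; last exact: reg_normalZ.
have [K vsK] := vs_v (e / t) (divr_gt0 e0 t0); exists K => k Kk.
by rewrite /= -scalerBr fnormZ gtr0_norm // mulrC -ltr_pdivlMr ?vsK.
Qed.

Lemma exists_pseudo_proj u x : seq_closed O -> O u -> exists z, pseudo_proj O x u z.
Proof.
move=> O_closed Ou; have [z [Oz z_min]] := exists_proj x O_closed Ou.
exists z; split=> //; split; first by apply: reg_lim_normal; apply: proj_reg_normal.
by rewrite fnormBC [fnorm (u - x)]fnormBC z_min.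
Qed.

End NormalCones.

Lemma exists_proj_rank (R : realType) m (c : comp R m) X :
  exists Y, proj (@rkset R m c) X Y.
Proof.
by apply: (exists_proj (Z0 := 0)); [apply: seq_closed_rank_le | rewrite /rkset /= mxrank0].
Qed.

Lemma xiset_nonempty (R : realType) m lam (cs : seq (comp R m)) y :
  exists w, xiset lam cs y w.
Proof.
elim: cs => [|c cs [s xs]]; first by exists 0.
by have [Y cY] := exists_proj_rank (cA c y); eexists; exists Y, s.
Qed.

Section Slopes.
Variable R : realType.

Definition has_slope (psi : R -> R) (t D : R) :=
  forall e, 0 < e -> exists2 d, 0 < d & forall s, `|s - t| < d ->
    `|psi s - psi t - D * (s - t)| <= e * `|s - t|.

Lemma has_slope_is_derive psi t D : has_slope psi t D -> is_derive t 1 psi D.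
Proof.
move=> psiD.
have cD : (fun h => h^-1 *: ((psi \o shift t) (h *: 1) - psi t)) @ 0^' --> D.
  apply/cvgrPdist_le => e e0; have [d d0 psid] := psiD e e0.
  near=> s.
  have s0 : s != 0 by near: s; exact: nbhs_dnbhs_neq.
  have sd : `|s + t - t| < d by rewrite addrK; near: s; apply: dnbhs0_lt.
  have := psid _ sd; rewrite addrK /= [s *: 1]mulr1 /shift /= => psis.
  rewrite -(@ler_pM2r _ `|s|) ?normr_gt0 // -normrM mulrBl mulrAC.
  by rewrite mulVf // mul1r distrC.
by apply: DeriveDef; [apply/cvg_ex; exists D | exact: cvg_lim].
Unshelve. all: by end_near.
Qed.

Lemma has_slope_unique psi t D1 D2 : has_slope psi t D1 -> has_slope psi t D2 -> D1 = D2.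
Proof. by move=> /has_slope_is_derive[_ <-] /has_slope_is_derive[_ <-]. Qed.

Lemma has_slope_le0_le psi D : (forall t, has_slope psi t (D t)) ->
  (forall t, 0 < t < 1 -> D t <= 0) -> psi 1 <= psi 0.
Proof.
move=> psiD D_le0.
have dpsi t : derivable psi t 1 /\ derive1 psi t = D t.
  by have [? Dt] := has_slope_is_derive (psiD t); rewrite derive1E Dt.
apply: (@ler0_derive1_le_cc _ psi 0 1) => //; rewrite ?in_itv /= ?lexx ?ler01 //.
- by move=> x _; case: (dpsi x).
- by move=> x; rewrite in_itv /= (dpsi x).2 => /D_le0.
- by apply: derivable_within_continuous => x _; case: (dpsi x).
Qed.

Lemma has_slopeD phi psi t D E : has_slope phi t D -> has_slope psi t E ->
  has_slope (fun s => phi s + psi s) t (D + E).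
Proof.
move=> phiD psiE e e0; have e20 : 0 < e / 2 by rewrite divr_gt0.
have [d1 d10 phid] := phiD _ e20; have [d2 d20 psid] := psiE _ e20.
exists (Num.min d1 d2) => [|s]; first by rewrite lt_min d10 d20.
rewrite lt_min => /andP[s1 s2].
have -> : phi s + psi s - (phi t + psi t) - (D + E) * (s - t) =
    (phi s - phi t - D * (s - t)) + (psi s - psi t - E * (s - t)) by ring.
by rewrite (le_trans (ler_normD _ _)) // [e]splitr mulrDl lerD ?phid ?psid.
Qed.

Lemma has_slope_quadratic a b t :
  has_slope (fun s => a * s + b * s ^+ 2) t (a + 2 * b * t).
Proof.
move=> e e0; exists (e / (`|b| + 1)) => [|s st]; first by rewrite divr_gt0 ?ltr_wpDl.
have -> : a * s + b * s ^+ 2 - (a * t + b * t ^+ 2) - (a + 2 * b * t) * (s - t) =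
    b * (s - t) * (s - t) by ring.
rewrite !normrM ler_wpM2r // (le_trans _ (ltW (_ : `|s - t| * (`|b| + 1) < e))) //.
  by rewrite mulrC ler_wpM2l // lerDl.
by rewrite -ltr_pdivlMr ?ltr_wpDl.
Qed.

Lemma is_gradient_has_slope m (f : 'rV[R]_m -> R) g y d t : is_gradient f g ->
  has_slope (fun s => f (y + s *: d)) t (fip (g (y + t *: d)) d).
Proof.
move=> fg e e0; set x := y + t *: d.
have d1 : 0 < fnorm d + 1 by rewrite ltr_wpDl ?fnorm_ge0.
have [r r0 fx] := fg x (e / (fnorm d + 1)) (divr_gt0 e0 d1).
exists (r / (fnorm d + 1)) => [|s st]; first by rewrite divr_gt0.
have xs : y + s *: d - x = (s - t) *: d by rewrite /x opprD addrACA subrr add0r scalerBl.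
have := fx (y + s *: d); rewrite xs fipZr fnormZ mulrC [_ * (s - t)]mulrC => fxs.
apply: le_trans (fxs _) _.
  apply: le_lt_trans (_ : _ <= `|s - t| * (fnorm d + 1)) _.
    by rewrite mulrC ler_wpM2l ?lerDl.
  by rewrite -ltr_pdivlMr.
by rewrite mulrA ler_wpM2r // mulrAC ler_pdivrMr // ler_wpM2l ?lerDl ?(ltW e0).
Qed.

End Slopes.

Section Gradients.
Variables (R : realType) (m : nat).
Implicit Types (f : 'rV[R]_m -> R) (g : 'rV[R]_m -> 'rV[R]_m).

Lemma is_gradient_unique f g1 g2 : is_gradient f g1 -> is_gradient f g2 -> g1 =1 g2.
Proof.
move=> fg1 fg2 x; apply/eqP; rewrite -subr_eq0; apply/eqP/fip_eq0.
have := has_slope_unique (is_gradient_has_slope x (g1 x - g2 x) 0 fg1)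
                         (is_gradient_has_slope x (g1 x - g2 x) 0 fg2).
by rewrite scale0r addr0 fipBl => ->; rewrite subrr.
Qed.

Lemma lipschitz_ge0 g : lipschitz g ->
  exists2 L, 0 <= L & forall x z, fnorm (g x - g z) <= L * fnorm (x - z).
Proof.
move=> [L gL]; exists (Num.max L 0) => [|x z]; first by rewrite le_max lexx orbT.
by rewrite (le_trans (gL x z)) // ler_wpM2r ?fnorm_ge0 // le_max lexx.
Qed.

Lemma descent_lemma f g Lg : is_gradient f g ->
  (forall x z, fnorm (g x - g z) <= Lg * fnorm (x - z)) -> 0 <= Lg ->
  forall y d, f (y + d) <= f y + fip (g y) d + Lg * fnorm d ^+ 2.
Proof.
move=> fg gL Lg0 y d; set b := fip (g y) d; set K := Lg * fnorm d ^+ 2.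
pose psi s := f (y + s *: d) + (- b * s + - K * s ^+ 2).
pose D t := fip (g (y + t *: d)) d + (- b + 2 * - K * t).
suff : psi 1 <= psi 0.
  by rewrite /psi scale1r scale0r addr0 mulr1 expr1n mulr1 mulr0 expr0n /= mulr0 !addr0; lra.
apply: (@has_slope_le0_le _ psi D) => [t|t /andP[t0 _]].
  by apply: has_slopeD; [apply: is_gradient_has_slope | apply: has_slope_quadratic].
have : fip (g (y + t *: d)) d - b <= Lg * t * fnorm d ^+ 2.
  rewrite -fipBl (le_trans (ler_norm _)) // (le_trans (normr_fip_le _ _)) //.
  rewrite expr2 mulrA ler_wpM2r ?fnorm_ge0 // (le_trans (gL _ _)) //.
  by rewrite addrC addKr fnormZ ger0_norm ?(ltW t0) // mulrA.
have : 0 <= K * t by rewrite mulr_ge0 ?(ltW t0) // mulr_ge0 ?sqr_ge0.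
rewrite /D /K; lra.
Qed.

End Gradients.

Section Penalty.
Variables (R : realType) (m : nat) (lam : R).
Implicit Types (cs : seq (comp R m)) (y z u d w : 'rV[R]_m).

Definition penalty cs y := \sum_(c <- cs) (2 * lam)^-1 * fnorm (cA c y) ^+ 2.

Definition penalty_grad cs y := \sum_(c <- cs) lam^-1 *: adj (cA c) (cA c y).

Definition penalty_const cs := \sum_(c <- cs) (2 * lam)^-1 * (cp c * cq c)%:R.

Definition dist_penalty cs y :=
  \sum_(c <- cs) (2 * lam)^-1 * dist (cA c y) (@rkset R m c) ^+ 2.

Lemma fip_suml (I : Type) (r : seq I) (F : I -> 'rV[R]_m) d :
  fip (\sum_(i <- r) F i) d = \sum_(i <- r) fip (F i) d.
Proof.
by elim: r => [|i r IH]; rewrite ?big_nil ?fip0l // !big_cons fipDl IH.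
Qed.

Hypothesis lam_gt0 : 0 < lam.

Lemma inv2lam_ge0 : 0 <= (2 * lam)^-1.
Proof. by rewrite invr_ge0 mulr_ge0 // ltW. Qed.

Lemma penalty_expand cs y z : all_coord_maps cs ->
  penalty cs z - penalty cs y - fip (penalty_grad cs y) (z - y) = penalty cs (z - y).
Proof.
rewrite /penalty /penalty_grad fip_suml -!sumrB.
elim: cs => [|c cs IH] /= => [_|[Ac /IH cs_exp]]; first by rewrite !big_nil.
rewrite !big_cons -cs_exp; congr (_ + _).
rewrite fipZl fip_adj // (coord_mapB Ac) (sqr_fnormB (cA c z)) fipBr !sqr_fnorm.
by rewrite (fipC (cA c z)) invfM; field; rewrite gt_eqF.
Qed.

Lemma penalty_ge0 cs y : 0 <= penalty cs y.
Proof. by apply: sumr_ge0 => c _; rewrite mulr_ge0 ?inv2lam_ge0 ?sqr_ge0. Qed.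

Lemma penalty_const_ge0 cs : 0 <= penalty_const cs.
Proof. by apply: sumr_ge0 => c _; rewrite mulr_ge0 ?inv2lam_ge0. Qed.

Lemma penalty_le cs d : all_coord_maps cs ->
  penalty cs d <= penalty_const cs * fnorm d ^+ 2.
Proof.
rewrite /penalty /penalty_const mulr_suml.
elim: cs => [|c cs IH] /= => [_|[Ac /IH cs_le]]; first by rewrite !big_nil.
rewrite !big_cons lerD // -mulrA ler_wpM2l ?inv2lam_ge0 //.
exact: sqr_fnorm_coord_map_le.
Qed.

Lemma is_gradient_hfun f gf cs : is_gradient f gf -> all_coord_maps cs ->
  is_gradient (hfun f cs lam) (fun y => gf y + penalty_grad cs y).
Proof.
move=> fg cs_coord x e e0; set K := penalty_const cs.
have e20 : 0 < e / 2 by rewrite divr_gt0.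
have [df df0 fx] := fg x _ e20.
have K1 : 0 < K + 1 by rewrite ltr_wpDl ?penalty_const_ge0.
have dq0 : 0 < e / (2 * (K + 1)) by rewrite divr_gt0 // mulr_gt0.
exists (Num.min df (e / (2 * (K + 1)))) => [|z]; first by rewrite lt_min df0 dq0.
rewrite lt_min => /andP[zdf zdq].
have -> : hfun f cs lam z - hfun f cs lam x - fip (gf x + penalty_grad cs x) (z - x) =
    (f z - f x - fip (gf x) (z - x)) +
    (penalty cs z - penalty cs x - fip (penalty_grad cs x) (z - x)).
  by rewrite /hfun -/(penalty cs z) -/(penalty cs x) fipDl; ring.
rewrite penalty_expand // (le_trans (ler_normD _ _)) // [e]splitr mulrDl lerD ?fx //.
rewrite ger0_norm ?penalty_ge0 // (le_trans (penalty_le _ cs_coord)) //.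
rewrite expr2 mulrA ler_wpM2r ?fnorm_ge0 //.
apply: le_trans (_ : K * (e / (2 * (K + 1))) <= _).
  by rewrite ler_wpM2l ?penalty_const_ge0 ?(ltW zdq).
rewrite mulrA ler_pdivrMr ?mulr_gt0 // (_ : e / 2 * (2 * (K + 1)) = e * (K + 1)).
  by rewrite mulrC ler_wpM2l ?lerDl ?(ltW e0).
by field.
Qed.

Lemma dist_penalty_majorized cs y u w : all_coord_maps cs -> xiset lam cs y w ->
  dist_penalty cs u <=
    dist_penalty cs y + penalty cs u - penalty cs y - fip w (u - y).
Proof.
rewrite /dist_penalty /penalty.
elim: cs w => [|c cs IH] w /= => [_ ->|[Ac cs_coord] [Y [s [cY [xs ->]]]]].
  by rewrite !big_nil fip0l !subr0 addr0.
rewrite !big_cons fipDl fipZl fip_adj // (dist_proj cY).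
have dist_u : dist (cA c u) (@rkset R m c) ^+ 2 <= fnorm (cA c u - Y) ^+ 2.
  by rewrite ler_pXn2r ?nnegrE ?fnorm_ge0 ?(dist_ge0 _ cY.1) ?(dist_le _ cY.1).
have expand : (2 * lam)^-1 * fnorm (cA c u - Y) ^+ 2 =
    (2 * lam)^-1 * fnorm (cA c y - Y) ^+ 2 + (2 * lam)^-1 * fnorm (cA c u) ^+ 2
    - (2 * lam)^-1 * fnorm (cA c y) ^+ 2 - lam^-1 * fip Y (cA c (u - y)).
  rewrite (coord_mapB Ac) !sqr_fnormB fipBr !(fipC Y) invfM.
  by field; rewrite gt_eqF.
have := IH s cs_coord xs; have := ler_wpM2l inv2lam_ge0 dist_u.
rewrite expand; lra.
Qed.

Lemma resset_xiset cs y w : all_coord_maps cs -> xiset lam cs y w ->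
  resset lam cs y (penalty_grad cs y - w).
Proof.
rewrite /penalty_grad.
elim: cs w => [|c cs IH] w /= => [_ ->|[Ac cs_coord] [Y [s [cY [xs ->]]]]].
  by rewrite big_nil subr0.
exists Y, (penalty_grad cs y - s); do !split=> //; first exact: IH.
by rewrite big_cons adjB scalerBr opprD addrACA.
Qed.

End Penalty.

Lemma bigmaxe_EFin (R : realType) (r : seq nat) (g : nat -> R) :
  r != [::] -> (forall j, j \in r -> 0 <= g j) ->
  \big[maxe/-oo%E]_(j <- r) (g j)%:E = (\big[Num.max/0]_(j <- r) g j)%:E.
Proof.
elim: r => [|a r IH] // _ g_ge0; rewrite !big_cons.
have [->|r0] := eqVneq r [::]; first by rewrite !big_nil maxeNy max_l ?g_ge0 ?mem_head.
by rewrite IH ?EFin_max // => j jr; rewrite g_ge0 // inE jr orbT.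
Qed.

Lemma ler_bernoulli (R : realType) (x : R) n : 0 <= x -> 1 + n%:R * x <= (1 + x) ^+ n.
Proof.
move=> x0; elim: n => [|n IH]; first by rewrite mul0r addr0 expr0.
rewrite exprS -[n.+1]addn1 natrD mulrDl mul1r.
have : 0 <= n%:R * x * x by rewrite !mulr_ge0.
have : (1 + x) * (1 + n%:R * x) <= (1 + x) * (1 + x) ^+ n by rewrite ler_wpM2l ?addr_ge0.
lra.
Qed.

Section SufficientDecrease.
Variables (R : realType) (m : nat) (O : set 'rV[R]_m) (cs : seq (comp R m)).
Variables (f : 'rV[R]_m -> R) (gf gh : 'rV[R]_m -> 'rV[R]_m) (lam Lg : R).
Hypothesis cs_coord : all_coord_maps cs.
Hypothesis fg : is_gradient f gf.
Hypothesis gf_lipschitz : forall x z, fnorm (gf x - gf z) <= Lg * fnorm (x - z).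
Hypothesis Lg_ge0 : 0 <= Lg.
Hypothesis lam_gt0 : 0 < lam.
Hypothesis ghE : forall y, gh y = gf y + penalty_grad lam cs y.
Hypothesis f_ge0 : forall y, 0 <= f y.

(* the finite part of F_lambda on Omega *)
Definition objective y := f y + dist_penalty lam cs y.

Lemma FlamE y : O y -> Flam f O cs lam y = (objective y)%:E.
Proof. by move=> Oy; rewrite /Flam /indicator mem_set // adde0 -EFinD. Qed.

Lemma objective_ge0 y : 0 <= objective y.
Proof.
by rewrite addr_ge0 // sumr_ge0 // => c _; rewrite mulr_ge0 ?inv2lam_ge0 ?sqr_ge0.
Qed.

Lemma pseudo_proj_step_le y g L u : 0 < L -> pseudo_proj O (y - L^-1 *: g) y u ->
  L / 2 * fnorm (u - y) ^+ 2 + fip (u - y) g <= 0.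
Proof.
move=> L0 [_ [_ u_le]].
have : fnorm ((u - y) + L^-1 *: g) ^+ 2 <= fnorm (L^-1 *: g) ^+ 2.
  move: u_le; rewrite !opprB !addrA addrAC [y + _ - _]addrAC subrr add0r.
  by rewrite [u - _ + _]addrAC ler_pXn2r ?nnegrE ?fnorm_ge0.
rewrite sqr_fnormD fipZr => h.
have -> : L / 2 * fnorm (u - y) ^+ 2 + fip (u - y) g =
    L / 2 * (fnorm (u - y) ^+ 2 + 2 * (L^-1 * fip (u - y) g)) by field; rewrite gt_eqF.
by rewrite pmulr_rle0 ?divr_gt0 //; lra.
Qed.

Lemma sufficient_decrease y xi L u : xiset lam cs y xi -> 0 < L ->
  pseudo_proj O (y - L^-1 *: (gh y - xi)) y u ->
  objective u <= objective y - (L / 2 - Lg - penalty_const lam cs) * fnorm (u - y) ^+ 2.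
Proof.
move=> xi_y L0 /(pseudo_proj_step_le L0) step_le.
have f_desc := descent_lemma fg gf_lipschitz Lg_ge0 y (u - y); rewrite addrC subrK in f_desc.
have pen_exp := penalty_expand lam_gt0 y u cs_coord.
have pen_le := penalty_le lam_gt0 (u - y) cs_coord.
have dist_maj := dist_penalty_majorized lam_gt0 u cs_coord xi_y.
move: step_le; rewrite /objective fipC ghE fipBl fipDl.
lra.
Qed.

End SufficientDecrease.

Lemma exists_expr_ge (R : realType) (T L0 tau : R) : 0 < L0 -> 1 < tau ->
  exists i, T <= L0 * tau ^+ i.
Proof.
move=> L0_gt0 tau_gt1; have t0 : 0 < tau - 1 by rewrite subr_gt0.
set i := Num.Def.archi_bound (`|T| / (L0 * (tau - 1))); exists i.
have : `|T| / (L0 * (tau - 1)) < i%:R.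
  by apply: archi_boundP; rewrite divr_ge0 // mulr_ge0 // ltW.
rewrite ltr_pdivrMr ?mulr_gt0 // => Ti.
have := ler_bernoulli i (ltW t0); rewrite [1 + (tau - 1)]addrC subrK => bern.
rewrite (le_trans (ler_norm T)) // (le_trans (ltW Ti)) // mulrCA ler_wpM2l ?ltW //.
by rewrite (lt_le_trans _ bern) // ltrDr.
Qed.

Section LineSearch.
Variables (R : realType) (m : nat) (O : set 'rV[R]_m) (cs : seq (comp R m)).
Variables (f : 'rV[R]_m -> R) (gf gh : 'rV[R]_m -> 'rV[R]_m) (lam Lg c : R) (M : nat).
Variables (tau Lmin Lmax : R).
Hypothesis cs_coord : all_coord_maps cs.
Hypothesis fg : is_gradient f gf.
Hypothesis gf_lipschitz : forall x z, fnorm (gf x - gf z) <= Lg * fnorm (x - z).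
Hypothesis Lg_ge0 : 0 <= Lg.
Hypothesis lam_gt0 : 0 < lam.
Hypothesis ghE : forall y, gh y = gf y + penalty_grad lam cs y.
Hypothesis f_ge0 : forall y, 0 <= f y.
Hypothesis c_gt0 : 0 < c.
Hypothesis Lmin_gt0 : 0 < Lmin.
Hypothesis tau_gt1 : 1 < tau.

Local Notation F := (Flam f O cs lam).
Local Notation obj := (objective cs f lam).
Local Notation step := (alg_step O (xiset lam cs) gh F M c Lmin Lmax tau).

(* past this value of L_{l,i}, the line-search test always succeeds *)
Definition ls_threshold := 2 * (Lg + penalty_const lam cs) + c.

Definition nm_max (y : nat -> 'rV[R]_m) l := \big[Num.max/0]_(l - M <= j < l.+1) obj (y j).

Lemma tau_gt0 : 0 < tau.
Proof. exact: lt_trans ltr01 tau_gt1. Qed.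

Lemma ls_threshold_gt0 : 0 < ls_threshold.
Proof. by rewrite ltr_wpDl // mulr_ge0 // addr_ge0 // penalty_const_ge0. Qed.

Lemma nm_max_ub y l j : (l - M <= j <= l)%N -> obj (y j) <= nm_max y l.
Proof. by move=> jl; apply: (@le_bigmax_seq _ _ _ _ _ j); rewrite // mem_index_iota ltnS. Qed.

Lemma nm_max_le y l B : 0 <= B -> (forall j, (l - M <= j <= l)%N -> obj (y j) <= B) ->
  nm_max y l <= B.
Proof.
move=> B0 objB; rewrite /nm_max big_seq; apply: bigmax_le => // j.
by rewrite mem_index_iota ltnS => /objB.
Qed.

Lemma nm_max_ge0 y l : 0 <= nm_max y l.
Proof.
apply: le_trans (objective_ge0 cs lam_gt0 f_ge0 (y l)) _.
by rewrite nm_max_ub // leq_subr leqnn.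
Qed.

Lemma nm_max0 y : nm_max y 0 = obj (y 0%N).
Proof.
by rewrite /nm_max sub0n /index_iota big_cons big_nil max_l ?(objective_ge0 cs lam_gt0 f_ge0).
Qed.

Lemma maxF_nm_max y l : (forall j, (j <= l)%N -> O (y j)) -> maxF F M y l = (nm_max y l)%:E.
Proof.
move=> Oy; rewrite /maxF /nm_max (eq_big_seq (fun j => (obj (y j))%:E)); last first.
  by move=> j; rewrite mem_index_iota ltnS => /andP[_ /Oy /(FlamE cs f lam)].
apply: bigmaxe_EFin => [|j _]; last exact: objective_ge0.
by apply/eqP => /(congr1 (fun s => l \in s)); rewrite mem_index_iota leq_subr ltnS leqnn.
Qed.

Lemma ls_ok_large y l xi L u : (forall j, (j <= l)%N -> O (y j)) ->
  xiset lam cs (y l) xi -> 0 < L -> ls_threshold <= L ->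
  pseudo_proj O (y l - L^-1 *: (gh (y l) - xi)) (y l) u -> ls_ok F M c y l u.
Proof.
move=> Oy xi_y L0 L_large u_pp; have Ou : O u by case: u_pp.
have decr := sufficient_decrease cs_coord fg gf_lipschitz Lg_ge0 lam_gt0 ghE xi_y L0 u_pp.
have := @nm_max_ub y l l; rewrite leq_subr leqnn => /(_ isT).
have : c / 2 * fnorm (u - y l) ^+ 2 <=
    (L / 2 - Lg - penalty_const lam cs) * fnorm (u - y l) ^+ 2.
  by rewrite ler_wpM2r ?sqr_ge0 //; move: L_large; rewrite /ls_threshold; lra.
rewrite /ls_ok maxF_nm_max // FlamE // -EFinB lee_fin; lra.
Qed.

Lemma step_O y l Lb : step y l Lb -> O (y l.+1).
Proof.
by move=> [xi [_ [L0 [_ [i [u [u_pp [_ [_ [_ ->]]]]]]]]]]; case: (u_pp i (leqnn i)).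
Qed.

Lemma steps_O y l : O (y 0%N) -> (forall j, (j < l)%N -> exists Lb, step y j Lb) ->
  forall j, (j <= l)%N -> O (y j).
Proof. by move=> Oy0 steps; elim=> // j IH jl; have [Lb /step_O] := steps j jl. Qed.

Lemma step_L_bound y l Lb : (forall j, (j <= l)%N -> O (y j)) -> step y l Lb ->
  0 < Lb <= Lmax + tau * ls_threshold.
Proof.
move=> Oy [xi [xi_y [L0 [/andP[L0min L0max] [i [u [u_pp [u_fail [_ [-> _]]]]]]]]]].
have L0_gt0 : 0 < L0 by apply: lt_le_trans Lmin_gt0 L0min.
have tau_ge0 := ltW tau_gt0; have thr_gt0 := ls_threshold_gt0.
rewrite mulr_gt0 ?exprn_gt0 ?tau_gt0 //=.
case: i u_pp u_fail => [|i] u_pp u_fail.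
  by rewrite expr0 mulr1 (le_trans L0max) // lerDl mulr_ge0 // ltW.
(* the previous trial L0 tau^i was rejected, so it lies below the threshold *)
have small : L0 * tau ^+ i < ls_threshold.
  rewrite ltNge; apply/negP => large; apply: (u_fail i (ltnSn i)).
  by apply: ls_ok_large large (u_pp _ (leqnSn i)); rewrite ?mulr_gt0 ?exprn_gt0 ?tau_gt0.
rewrite exprSr mulrA mulrC; apply: le_trans (_ : tau * ls_threshold <= _).
  by rewrite ler_wpM2l // ltW.
by rewrite lerDr (le_trans (ltW L0_gt0)).
Qed.

Lemma line_search_terminates y l : seq_closed O -> O (y 0%N) ->
  (forall j, (j < l)%N -> exists Lb, step y j Lb) ->
  (exists xi, xiset lam cs (y l) xi) /\
  forall xi, xiset lam cs (y l) xi -> forall L0, Lmin <= L0 <= Lmax ->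
    (forall j, exists u, pseudo_proj O (trial gh (y l) xi L0 tau j) (y l) u) /\
    forall u : nat -> 'rV[R]_m,
      (forall j, pseudo_proj O (trial gh (y l) xi L0 tau j) (y l) (u j)) ->
      exists i, ls_ok F M c y l (u i).
Proof.
move=> O_closed Oy0 steps; have Oy := steps_O Oy0 steps.
split=> [|xi xi_y L0 /andP[L0min _]]; first exact: xiset_nonempty.
have L0_gt0 : 0 < L0 by apply: lt_le_trans Lmin_gt0 L0min.
split=> [j|u u_pp]; first exact: exists_pseudo_proj O_closed (Oy l (leqnn l)).
have [i large] := exists_expr_ge ls_threshold L0_gt0 tau_gt1.
by exists i; apply: ls_ok_large (u_pp i); rewrite ?mulr_gt0 ?exprn_gt0 ?tau_gt0.
Qed.

Section Run.
Variables (y : nat -> 'rV[R]_m) (Lb : nat -> R).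
Hypothesis Oy0 : O (y 0%N).
Hypothesis steps : forall l, step y l (Lb l).

Lemma run_O l : O (y l).
Proof. by apply: (@steps_O y l) => // j _; exists (Lb j). Qed.

Lemma run_L_bound l : 0 < Lb l <= Lmax + tau * ls_threshold.
Proof. exact: step_L_bound (fun j _ => run_O j) (steps l). Qed.

Lemma run_decrease l :
  obj (y l.+1) <= nm_max y l - c / 2 * fnorm (y l.+1 - y l) ^+ 2.
Proof.
have [_ [_ [_ [_ [i [u [_ [_ [ok [_ yl1]]]]]]]]]] := steps l.
move: ok; rewrite /ls_ok -yl1 maxF_nm_max => [|j _]; last exact: run_O.
by rewrite (FlamE cs f lam (run_O _)) -EFinB lee_fin.
Qed.

Lemma nm_max_succ l : nm_max y l.+1 <= nm_max y l.
Proof.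
apply: nm_max_le (nm_max_ge0 _ _) _ => j /andP[lj jl].
have [->|jn] := eqVneq j l.+1.
  rewrite (le_trans (run_decrease l)) // lerBlDr lerDl mulr_ge0 ?sqr_ge0 //.
  by rewrite divr_ge0 // ltW.
by apply: nm_max_ub; apply/andP; split; lia.
Qed.

Lemma nm_max_antitone l k : nm_max y (l + k) <= nm_max y l.
Proof. by elim: k => [|k IH]; rewrite ?addn0 // addnS (le_trans (nm_max_succ _)). Qed.

Lemma objective_le_init l : obj (y l) <= obj (y 0%N).
Proof.
rewrite -(nm_max0 y) (le_trans _ (nm_max_antitone 0 l)) // add0n.
by rewrite nm_max_ub // leq_subr leqnn.
Qed.

Lemma nm_max_drop eps : 0 < eps -> (forall l, eps < fnorm (y l.+1 - y l)) ->
  forall l, nm_max y (l + M.+1) <= nm_max y l - c / 2 * eps ^+ 2.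
Proof.
move=> eps0 long l.
have decr j : obj (y j.+1) <= nm_max y j - c / 2 * eps ^+ 2.
  apply: le_trans (run_decrease j) _; rewrite lerD2l lerN2 ler_wpM2l ?divr_ge0 ?(ltW c_gt0) //.
  by rewrite ler_pXn2r ?nnegrE ?fnorm_ge0 ?(ltW eps0) ?(ltW (long j)).
apply: nm_max_le => [|[|j] /andP[lj jl]]; last 2 first.
- by exfalso; lia.
- have -> : j = (l + (j - l))%N by lia.
  by apply: le_trans (decr _) _; rewrite lerD2r nm_max_antitone.
by have := decr l; have := objective_ge0 cs lam_gt0 f_ge0 (y l.+1); lra.
Qed.

Lemma exists_short_step eps : 0 < eps -> exists l, fnorm (y l.+1 - y l) <= eps.
Proof.
move=> eps0; apply: contrapT => no_short.
have long l : eps < fnorm (y l.+1 - y l).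
  by rewrite ltNge; apply/negP => short; apply: no_short; exists l.
set delta := c / 2 * eps ^+ 2.
have delta0 : 0 < delta by rewrite mulr_gt0 ?divr_gt0 ?exprn_gt0.
have iter k : nm_max y (k * M.+1) <= nm_max y 0 - k%:R * delta.
  elim: k => [|k IH]; first by rewrite mul0n mul0r subr0.
  rewrite mulSn addnC (le_trans (nm_max_drop eps0 long _)) // -/delta.
  by rewrite -[k.+1]addn1 natrD mulrDl mul1r; lra.
set k := Num.Def.archi_bound (nm_max y 0 / delta).
have : nm_max y 0 / delta < k%:R by apply: archi_boundP; rewrite divr_ge0 ?nm_max_ge0 ?ltW.
rewrite ltr_pdivrMr // ltNge => /negP; apply.
by have := le_trans (nm_max_ge0 _ _) (iter k); rewrite subr_ge0.
Qed.

Lemma stationarity l :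
  (edist 0 (stat_set O gf lam cs y l) <= (Lb l * fnorm (y l.+1 - y l))%:E)%E.
Proof.
have /andP[Lb_gt0 _] := run_L_bound l.
have [xi [xi_y [L0 [_ [i [u [u_pp [_ [_ [Lbl yl1]]]]]]]]]] := steps l.
have [_ [normal _]] := u_pp i (leqnn i); rewrite -yl1 in normal.
set v := trial gh (y l) xi L0 tau i - y l.+1.
set w := gf (y l) + Lb l *: v + (penalty_grad lam cs (y l) - xi).
have w_stat : stat_set O gf lam cs y l w.
  exists (Lb l *: v), (penalty_grad lam cs (y l) - xi).
  by split; [apply: lim_normalZ | split; [apply: resset_xiset |]].
(* w is Lb (y^l - y^{l+1}) *)
have -> : Lb l * fnorm (y l.+1 - y l) = fnorm (0 - w).
  rewrite sub0r fnormN fnormBC -[Lb l]gtr0_norm // -fnormZ; congr fnorm.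
  rewrite /w /v /trial -Lbl ghE; apply/matrixP => a b; rewrite !mxE.
  by field; rewrite gt_eqF.
by apply: ereal_inf_lbound; exists w.
Qed.

Lemma run_analysis :
  (exists B : R, forall l, `|Lb l| <= B) /\
  forall eps : R, 0 < eps -> exists l,
    fnorm (y l.+1 - y l) <= eps /\ (F (y l) <= F (y 0%N))%E /\
    (edist 0 (stat_set O gf lam cs y l) <= eps%:E)%E.
Proof.
set B := Lmax + tau * ls_threshold.
have B0 : 0 <= B by have /andP[/ltW L0 LB] := run_L_bound 0; apply: le_trans LB.
split=> [|eps eps0].
  by exists B => l; have /andP[Lb0 LbB] := run_L_bound l; rewrite gtr0_norm.
have [l short] := exists_short_step (divr_gt0 eps0 (ltr_wpDl B0 ltr01)).
have short_eps : fnorm (y l.+1 - y l) <= eps.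
  by rewrite (le_trans short) // ler_pdivrMr ?ltr_wpDl // ler_peMr ?lerDr ?(ltW eps0).
exists l; split=> //; split.
  by rewrite !(FlamE cs f lam (run_O _)) lee_fin objective_le_init.
apply: le_trans (stationarity l) _; rewrite lee_fin.
have /andP[/ltW Lb0 LbB] := run_L_bound l.
apply: le_trans (_ : B * (eps / (B + 1)) <= _); first by rewrite ler_pM ?fnorm_ge0.
by rewrite mulrCA ler_piMr ?(ltW eps0) // ler_pdivrMr ?ltr_wpDl // mul1r lerDl.
Qed.

End Run.

End LineSearch.

Theorem theorem3p1 (R : realType) (n N r : nat) (rs : 'I_N -> nat)
  (v : variant) (f : 'rV[R]_(N * n) -> R) (gf : 'rV[R]_(N * n) -> 'rV[R]_(N * n))
  (lam : R) (gh : 'rV[R]_(N * n) -> 'rV[R]_(N * n))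
  (y0 : 'rV[R]_(N * n)) (Lmin Lmax tau c : R) (M : nat) :
  (1 <= n)%N -> (1 <= N)%N ->
  (forall i, 0 < rs i)%N -> (0 < r)%N ->
  (forall i, rs i <= r)%N -> (r <= (n - 1) %/ 2)%N ->
  (forall y, 0 <= f y) -> level_bounded f ->
  is_gradient f gf -> lipschitz gf ->
  0 < lam ->
  is_gradient (hfun f (comps R n r rs v) lam) gh ->
  @Omega R N n r rs v y0 ->
  0 < Lmin -> Lmin < Lmax -> 1 < tau -> 0 < c ->
  let O := @Omega R N n r rs v in
  let cs := comps R n r rs v in
  let F := Flam f O cs lam in
  let Xi := xiset lam cs in
  (* (i) the line search at every reached iteration l is well defined and
     terminates, whatever admissible choices are made *)
  (forall (l : nat) (y : nat -> 'rV[R]_(N * n)), y 0%N = y0 ->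
     (forall j, (j < l)%N -> exists Lb,
        alg_step O Xi gh F M c Lmin Lmax tau y j Lb) ->
     (exists xi, Xi (y l) xi) /\
     forall xi, Xi (y l) xi -> forall L0, Lmin <= L0 <= Lmax ->
       (forall j, exists u, pseudo_proj O (trial gh (y l) xi L0 tau j) (y l) u) /\
       forall u : nat -> 'rV[R]_(N * n),
         (forall j, pseudo_proj O (trial gh (y l) xi L0 tau j) (y l) (u j)) ->
         exists i, ls_ok F M c y l (u i)) /\
  (* (ii) and (iii), for every run of the algorithm *)
  (forall (y : nat -> 'rV[R]_(N * n)) (Lb : nat -> R), y 0%N = y0 ->
     (forall l, alg_step O Xi gh F M c Lmin Lmax tau y l (Lb l)) ->
     (exists B : R, forall l, `|Lb l| <= B) /\
     forall eps : R, 0 < eps -> exists l : nat,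
       fnorm (y l.+1 - y l) <= eps /\
       (F (y l) <= F (y 0%N))%E /\
       (edist 0 (stat_set O gf lam cs y l) <= eps%:E)%E).
Proof.
move=> _ _ _ _ _ _ f_ge0 _ fg /lipschitz_ge0[Lg Lg_ge0 gf_lip] lam_gt0 gh_grad Oy0
  Lmin_gt0 _ tau_gt1 c_gt0 O cs F Xi.
have cs_coord : all_coord_maps cs by apply: all_coord_maps_comps.
have ghE := is_gradient_unique gh_grad (is_gradient_hfun lam_gt0 fg cs_coord).
split=> [l y y0E|y Lb y0E steps].
  apply: (line_search_terminates cs_coord fg gf_lip Lg_ge0 lam_gt0 ghE f_ge0) => //.
    exact: seq_closed_Omega.
  by rewrite y0E.
rewrite -y0E in Oy0.
exact: (run_analysis cs_coord fg gf_lip Lg_ge0 lam_gt0 ghE f_ge0 c_gt0 Lmin_gt0 tau_gt1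
  Oy0 steps).
Qed.
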